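(* For every $k\ge3$, the distribution $P_{k\text{-BAL}}$ satisfies SYM, BAL, MIN and UNI.
   Context: $\Omega=\{\pm1\}$, $q=2$, $k\ge3$. Let $\lambda=\lambda(k)\in(0,1)$ be the unique root in $(0,1)$ of $(1-\lambda)(1+\lambda)^{k-1}-1=0$. For $\tau\in\Omega^k$ let $\psi_\tau(\sigma)=\lambda^{\sum_{j=1}^k\mathbf 1\{\sigma_j=\tau_j\}}\big(1-\prod_{i=1}^k\mathbf 1\{\sigma_i=-\tau_i\}\big)$, and let $P_{k\text{-BAL}}$ be the uniform distribution on these $2^k$ functions. $\boldsymbol\psi$ denotes a sample from $P=P_{k\text{-BAL}}$, $\xi=q^{-k}\sum_{\sigma\in\Omega^k}\mathbb E[\boldsymbol\psi(\sigma)]$, $\psi^\theta(\sigma)=\psi(\sigma_{\theta(1)},\dots,\sigma_{\theta(k)})$. SYM: for all $i\in[k]$, $\omega\in\Omega$, $\psi$ in the support, $\sum_{\tau\in\Omega^k}\mathbf 1\{\tau_i=\omega\}\psi(\tau)=q^{k-1}\xi$, and $P(\psi)=P(\psi^\theta)$ for every permutation $\theta$. BAL: $\phi(\mu)=\sum_{\tau\in\Omega^k}\mathbb E[\boldsymbol\psi(\tau)]\prod_{i=1}^k\mu(\tau_i)$ is concave on distributions $\mu$ on $\Omega$ and maximised at the uniform distribution. MIN: among distributions $\rho$ on $\Omega\times\Omega$ with both marginals uniform, $\varphi(\rho)=\sum_{\sigma,\tau\in\Omega^k}\mathbb E[\boldsymbol\psi(\sigma)\boldsymbol\psi(\tau)]\prod_{i=1}^k\rho(\sigma_i,\tau_i)$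 has the uniform distribution as unique global minimiser. UNI: every CSP with constraint functions from the support of $P$ (constraint $a$ on a $k$-tuple $\partial a$ of variables) in which each constraint has pairwise distinct variables and whose bipartite variable–constraint graph is unicyclic admits $\sigma$ with $\prod_a\psi_a(\sigma(\partial a))>0$. *)

(* Omega = {+1,-1} is encoded as bool (true = +1, false = -1),
   so that "-omega" is "~~ omega". *)
From HB Require Import structures.
From mathcomp Require Import all_boot all_order all_algebra perm.
Set Implicit Arguments. Unset Strict Implicit. Unset Printing Implicit Defensive.
Import Order.TTheory GRing.Theory Num.Theory.
Local Open Scope ring_scope.

Definition Sig (k : nat) := {ffun 'I_k -> bool}.
Definition Fn (R : rcfType) (k : nat) := {ffun Sig k -> R}.

Section KBal.
Variables (R : rcfType) (k : nat) (lam : R).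

Definition psi_tau (tau : Sig k) : Fn R k :=
  [ffun sigma : Sig k =>
     lam ^+ (\sum_(j < k) (sigma j == tau j))%N
     * (1 - \prod_(i < k) ((sigma i == ~~ tau i)%:R : R))].

(* P_{k-BAL}: uniform distribution on the 2^k functions psi_tau;
   probability mass of a function psi. *)
Definition Pk (psi : Fn R k) : R :=
  (#|[set tau : Sig k | psi_tau tau == psi]|)%:R / (2 ^ k)%:R.

Definition Epsi (F : Fn R k -> R) : R :=
  (2 ^ k)%:R^-1 * \sum_(tau : Sig k) F (psi_tau tau).

Definition xi : R := (2 ^ k)%:R^-1 * \sum_(sigma : Sig k) Epsi (fun psi => psi sigma).

Definition psi_perm (psi : Fn R k) (theta : 'S_k) : Fn R k :=
  [ffun sigma : Sig k => psi [ffun i => sigma (theta i)]].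

Definition SYM : Prop :=
  (forall (i : 'I_k) (omega : bool) (psi : Fn R k), 0 < Pk psi ->
     \sum_(tau : Sig k | tau i == omega) psi tau = (2 ^ k.-1)%:R * xi)
  /\ (forall (psi : Fn R k) (theta : 'S_k), Pk psi = Pk (psi_perm psi theta)).

Definition is_dist1 (mu : {ffun bool -> R}) : Prop :=
  (forall w, 0 <= mu w) /\ \sum_(w : bool) mu w = 1.
Definition unif1 : {ffun bool -> R} := [ffun _ => 2%:R^-1].

Definition phi1 (mu : {ffun bool -> R}) : R :=
  \sum_(tau : Sig k) Epsi (fun psi => psi tau) * \prod_(i < k) mu (tau i).

Definition BAL : Prop :=
  (forall (mu nu : {ffun bool -> R}) (t : R), is_dist1 mu -> is_dist1 nu ->
     0 <= t <= 1 ->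
     t * phi1 mu + (1 - t) * phi1 nu <= phi1 [ffun w => t * mu w + (1 - t) * nu w])
  /\ (forall mu, is_dist1 mu -> phi1 mu <= phi1 unif1).

Definition is_dist2_unif_marg (rho : {ffun bool * bool -> R}) : Prop :=
  (forall w, 0 <= rho w) /\ \sum_(w : bool * bool) rho w = 1
  /\ (forall w, \sum_(w' : bool) rho (w, w') = 2%:R^-1)
  /\ (forall w, \sum_(w' : bool) rho (w', w) = 2%:R^-1).
Definition unif2 : {ffun bool * bool -> R} := [ffun _ => 4%:R^-1].

Definition phi2 (rho : {ffun bool * bool -> R}) : R :=
  \sum_(sigma : Sig k) \sum_(tau : Sig k)
     Epsi (fun psi => psi sigma * psi tau) * \prod_(i < k) rho (sigma i, tau i).

Definition MIN : Prop :=
  is_dist2_unif_marg unif2 /\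
  (forall rho, is_dist2_unif_marg rho -> rho <> unif2 -> phi2 unif2 < phi2 rho).

(* Factor graphs: n variables 'I_n, m constraints 'I_m; constraint a has
   constraint function psi_a and variable tuple dd a : 'I_k -> 'I_n. *)
Definition fg_vertex (n m : nat) := ('I_n + 'I_m)%type.

Definition fg_adj (n m : nat) (dd : 'I_m -> 'I_k -> 'I_n)
  : rel (fg_vertex n m) :=
  fun u v => match u, v with
  | inl x, inr a => x \in codom (dd a)
  | inr a, inl x => x \in codom (dd a)
  | _, _ => false
  end.

End KBal.

Section Graph.
Variables (V : finType) (e : rel V).
Definition connected_graph : Prop := forall u v : V, connect e u v.
Definition is_graph_cycle (c : seq V) : Prop := [/\ uniq c, (3 <= size c)%N & path.cycle e c].
Definition cycle_edges (c : seq V) : {set {set V}} :=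
  [set [set x; next c x] | x in c].
Definition unicyclic : Prop :=
  connected_graph /\ (exists c, is_graph_cycle c) /\
  (forall c c', is_graph_cycle c -> is_graph_cycle c' -> cycle_edges c = cycle_edges c').
End Graph.

Definition UNI (R : rcfType) (k : nat) (lam : R) : Prop :=
  forall (n m : nat) (psi : 'I_m -> Fn R k) (dd : 'I_m -> 'I_k -> 'I_n),
    (forall a, 0 < Pk lam (psi a)) ->
    (forall a, injective (dd a)) ->
    unicyclic (fg_adj dd) ->
    exists sigma : 'I_n -> bool,
      0 < \prod_(a < m) psi a [ffun i => sigma (dd a i)].

(* Write psi_tau(sigma) = prod_i lam^[sigma_i = tau_i] - prod_i [sigma_i <> tau_i]: every sum
   of psi_tau, or of a product of two of them, over assignments with some coordinates fixed
   then factorises over the coordinates.  Under (1 - lam)(1 + lam)^(k-1) = 1 both half-sums of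
   psi_tau equal lam (1 + lam)^(k-1), which gives SYM, and phi is a multiple of (sum mu)^k,
   which gives BAL.
   A coupling rho with uniform marginals is [[a, b], [b, a]] with a + b = 1/2, and
   phi(rho) = (lam^2 a + 2 lam b + a)^k - 2 (lam b + a)^k + a^k.  With r = (1 - lam)/(1 + lam)
   and u = 4a - 1 the root equation gives
     r^2 4^k phi(rho) = (1 - r)^2 + u r^2 sum_(j<k) ((1 + u r^2)^j + (1 + u)^j - 2 (1 + u r)^j),
   and u times the sum is positive for u <> 0: termwise by AM-GM if u > 0, by Bernoulli and
   k r <= 1 if u < 0.
   For UNI, delete an edge of the unique cycle of the factor graph.  What remains is a forest
   in which every constraint keeps at least two of its k >= 3 variables, so a private-neighbour
   argument gives the constraints distinct representatives; setting each representative to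
   the value tau_a asks for there makes every factor positive. *)

From HB Require Import structures.
From mathcomp Require Import all_boot all_order all_algebra perm.
From mathcomp Require Import ring lra.
Set Implicit Arguments. Unset Strict Implicit. Unset Printing Implicit Defensive.
Import Order.TTheory GRing.Theory Num.Theory.
Local Open Scope ring_scope.

Section SumProdFfun.
Variables (R : comPzRingType) (I T : finType).

Lemma sum_ffun_prod (F : I -> T -> R) :
  \sum_(s : {ffun I -> T}) \prod_i F i (s i) = \prod_i \sum_x F i x.
Proof. by rewrite bigA_distr_bigA. Qed.

Lemma sum_ffun2_prod (F : I -> T -> T -> R) :
  \sum_(s : {ffun I -> T}) \sum_(t : {ffun I -> T}) \prod_i F i (s i) (t i) =
  \prod_i \sum_x \sum_y F i x y.
Proof.
rewrite -sum_ffun_prod; apply: eq_bigr => s _.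
exact: (sum_ffun_prod (fun i => F i (s i))).
Qed.

Lemma sum_ffun_prod_fixed (F : I -> T -> R) (i : I) (w : T) :
  \sum_(s : {ffun I -> T} | s i == w) \prod_j F j (s j) =
  F i w * \prod_(j | j != i) \sum_x F j x.
Proof.
pose G j x := if j == i then (x == w)%:R * F j x else F j x.
have GE j x : j != i -> G j x = F j x by move=> /negbTE ji; rewrite /G ji.
have GiE x : G i x = (x == w)%:R * F i x by rewrite /G eqxx.
transitivity (\sum_(s : {ffun I -> T}) \prod_j G j (s j)).
  rewrite big_mkcond; apply: eq_bigr => s _ /=.
  rewrite [RHS](bigD1 i) //= GiE (bigD1 i) //=.
  under [in RHS]eq_bigr => j ji do rewrite GE //.
  by case: eqP; rewrite ?mul1r ?mul0r.
rewrite sum_ffun_prod (bigD1 i) //= (bigD1 w) //= GiE eqxx mul1r.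
rewrite big1 => [|x /negbTE xw]; last by rewrite GiE xw mul0r.
rewrite addr0; congr (_ * _); apply: eq_bigr => j ji.
by apply: eq_bigr => x _; apply: GE.
Qed.

End SumProdFfun.

Lemma sum_bool_expr_eq (R : pzRingType) (x : R) (b : bool) :
  \sum_(c : bool) x ^+ (c == b) = 1 + x.
Proof. by rewrite big_bool; case: b; rewrite /= ?expr1 ?expr0 // addrC. Qed.

Lemma sum_bool_eq_negb (R : pzRingType) (b : bool) :
  \sum_(c : bool) ((c == ~~ b)%:R : R) = 1.
Proof. by rewrite big_bool; case: b; rewrite /= ?addr0 ?add0r. Qed.

(** * Symmetry and balance *)

Section KBal.
Variables (R : rcfType) (k : nat) (lam : R).

Lemma psi_tauE (tau sigma : Sig k) :
  psi_tau lam tau sigma =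
  \prod_i lam ^+ (sigma i == tau i) - \prod_i ((sigma i == ~~ tau i)%:R : R).
Proof.
rewrite ffunE expr_sum mulrBr mulr1; congr (_ - _).
rewrite -big_split /=; apply: eq_bigr => i _.
by case: (sigma i); case: (tau i); rewrite ?mulr1 ?mulr0 ?expr0 ?mul1r.
Qed.

Lemma psi_tauC (tau sigma : Sig k) : psi_tau lam tau sigma = psi_tau lam sigma tau.
Proof.
rewrite !psi_tauE; congr (_ - _); apply: eq_bigr => i _.
  by rewrite eq_sym.
by case: (sigma i); case: (tau i).
Qed.

Lemma sum_psi_tau (sigma : Sig k) :
  \sum_(tau : Sig k) psi_tau lam tau sigma = (1 + lam) ^+ k - 1.
Proof.
under eq_bigr do rewrite psi_tauC psi_tauE.
rewrite sumrB (sum_ffun_prod (fun i b => lam ^+ (b == sigma i))).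
rewrite (sum_ffun_prod (fun i b => ((b == ~~ sigma i)%:R : R))).
under eq_bigr do rewrite sum_bool_expr_eq.
under [X in _ - X]eq_bigr do rewrite sum_bool_eq_negb.
by rewrite big1_eq prodr_const card_ord.
Qed.

Lemma sum_psi_tau_fixed (tau : Sig k) (i : 'I_k) (w : bool) :
  \sum_(sigma : Sig k | sigma i == w) psi_tau lam tau sigma =
  lam ^+ (w == tau i) * (1 + lam) ^+ k.-1 - (w == ~~ tau i)%:R.
Proof.
under eq_bigr do rewrite psi_tauE.
rewrite sumrB (sum_ffun_prod_fixed (fun j b => lam ^+ (b == tau j))).
rewrite (sum_ffun_prod_fixed (fun j b => ((b == ~~ tau j)%:R : R))).
under eq_bigr do rewrite sum_bool_expr_eq.
under [X in _ - _ * X]eq_bigr do rewrite sum_bool_eq_negb.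
by rewrite big1_eq mulr1 prodr_const cardC1 card_ord.
Qed.

Lemma mean_Sig_const (c : R) : (2 ^ k)%:R^-1 * \sum_(t : Sig k) c = c.
Proof.
rewrite sumr_const card_ffun card_bool card_ord -[c *+ _]mulr_natl mulKf //.
by rewrite pnatr_eq0 expn_eq0.
Qed.

Lemma Epsi_eval (sigma : Sig k) :
  Epsi lam (fun psi => psi sigma) = (2 ^ k)%:R^-1 * ((1 + lam) ^+ k - 1).
Proof. by rewrite /Epsi sum_psi_tau. Qed.

Lemma xiE : xi k lam = (2 ^ k)%:R^-1 * ((1 + lam) ^+ k - 1).
Proof. by rewrite /xi; under eq_bigr do rewrite Epsi_eval; rewrite mean_Sig_const. Qed.

Lemma Pk_gt0 (psi : Fn R k) : 0 < Pk lam psi -> exists tau, psi_tau lam tau = psi.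
Proof.
rewrite /Pk; have [->|] := posnP #|[set tau | psi_tau lam tau == psi]|.
  by rewrite mul0r ltxx.
by case/card_gt0P => tau; rewrite inE => /eqP <- _; exists tau.
Qed.

Definition Sig_perm (theta : 'S_k) (tau : Sig k) : Sig k := [ffun i => tau ((theta^-1)%g i)].

Lemma Sig_perm_inj (theta : 'S_k) : injective (Sig_perm theta).
Proof.
move=> s t /ffunP st; apply/ffunP => i.
by have := st (theta i); rewrite !ffunE permK.
Qed.

Lemma psi_perm_psi_tau (tau : Sig k) (theta : 'S_k) :
  psi_perm (psi_tau lam tau) theta = psi_tau lam (Sig_perm theta tau).
Proof.
apply/ffunP => s; rewrite !ffunE.
by congr (_ ^+ _ * (1 - _)); rewrite [RHS](reindex_inj (@perm_inj _ theta));
  apply: eq_bigr => j _; rewrite !ffunE permK.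
Qed.

Lemma psi_perm_inj (theta : 'S_k) : injective (fun psi : Fn R k => psi_perm psi theta).
Proof.
move=> psi phi /ffunP E; apply/ffunP => s.
have -> : s = [ffun i => [ffun j => s ((theta^-1)%g j)] (theta i)].
  by apply/ffunP => i; rewrite !ffunE permK.
by have := E [ffun j => s ((theta^-1)%g j)]; rewrite !ffunE.
Qed.

Lemma Pk_perm (psi : Fn R k) (theta : 'S_k) : Pk lam psi = Pk lam (psi_perm psi theta).
Proof.
rewrite /Pk -[#|[set t | _ == psi_perm psi theta]|](card_preimset _ (@Sig_perm_inj theta)).
congr (_%:R / _); apply: eq_card => t.
by rewrite !inE -psi_perm_psi_tau (inj_eq (@psi_perm_inj theta)).
Qed.

Lemma phi1E (mu : {ffun bool -> R}) :
  phi1 k lam mu = (2 ^ k)%:R^-1 * ((1 + lam) ^+ k - 1) * (\sum_w mu w) ^+ k.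
Proof.
rewrite /phi1; under eq_bigr do rewrite Epsi_eval.
by rewrite -mulr_sumr (sum_ffun_prod (fun _ b => mu b)) prodr_const card_ord.
Qed.

(* [phi1] is constant on distributions, so concavity holds with equality. *)
Lemma bal_holds : BAL k lam.
Proof.
split=> [mu nu t [_ mu1] [_ nu1] _|mu [_ mu1]]; rewrite !phi1E.
  have mix1 : \sum_w [ffun w => t * mu w + (1 - t) * nu w] w = 1.
    under eq_bigr do rewrite ffunE.
    by rewrite big_split -!mulr_sumr /= mu1 nu1; lra.
  by rewrite mu1 nu1 mix1 expr1n mulr1; lra.
have unif1_sum : \sum_w unif1 R w = 1 by rewrite big_bool /= !ffunE; field.
by rewrite mu1 unif1_sum.
Qed.

Hypothesis k_gt0 : (0 < k)%N.
Hypothesis lam_root : (1 - lam) * (1 + lam) ^+ k.-1 - 1 = 0.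

Lemma xi_root : (2 ^ k.-1)%:R * xi k lam = lam * (1 + lam) ^+ k.-1.
Proof.
rewrite xiE -(prednK k_gt0) expnS natrM exprS /=.
have := lam_root; set X := (1 + lam) ^+ k.-1 => rootX.
have -> : (1 + lam) * X - 1 = 2 * (lam * X) by lra.
by field; rewrite pnatr_eq0 expn_eq0.
Qed.

Lemma sym_marginal (i : 'I_k) (omega : bool) (psi : Fn R k) : 0 < Pk lam psi ->
  \sum_(tau : Sig k | tau i == omega) psi tau = (2 ^ k.-1)%:R * xi k lam.
Proof.
case/Pk_gt0 => tau <-; rewrite sum_psi_tau_fixed xi_root.
have := lam_root; set X := (1 + lam) ^+ k.-1 => rootX.
by case: omega; case: (tau i); rewrite /= ?expr0 ?expr1 ?mul1r ?subr0; lra.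
Qed.

Lemma sym_holds : SYM k lam.
Proof. by split=> [|psi theta]; [exact: sym_marginal | exact: Pk_perm]. Qed.

End KBal.

(** * Minimality of the uniform coupling *)

Lemma bernoulli_ineq (R : realDomainType) (n : nat) (x : R) :
  -1 <= x -> 1 + n%:R * x <= (1 + x) ^+ n.
Proof.
move=> x_ge; elim: n => [|n IH]; first by rewrite mul0r addr0 expr0.
have x1_ge0 : 0 <= 1 + x by lra.
have := ler_wpM2r x1_ge0 IH; rewrite exprSr -natr1.
have : 0 <= n%:R * x ^+ 2 :> R by rewrite mulr_ge0 ?ler0n ?sqr_ge0.
set P := (1 + x) ^+ n; set N := n%:R; nra.
Qed.

Lemma AGM2_expr (R : realDomainType) (n : nat) (a b c : R) :
  0 <= a -> 0 <= b -> 0 <= c -> c ^+ 2 <= a * b -> 2 * c ^+ n <= a ^+ n + b ^+ n.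
Proof.
move=> a0 b0 c0 cab.
have : c ^+ n * c ^+ n <= a ^+ n * b ^+ n.
  by rewrite -!exprMn lerXn2r ?nnegrE ?mulr_ge0 // -expr2.
have := exprn_ge0 n a0; have := exprn_ge0 n b0; have := exprn_ge0 n c0.
set A := a ^+ n; set B := b ^+ n; set C := c ^+ n => C0 B0 A0 CAB.
have := sqr_ge0 (A - B); nra.
Qed.

Section SecondDifference.
Variable R : realFieldType.

Definition geo_diff2 (k : nat) (u r : R) : R :=
  \sum_(j < k) ((1 + u * r ^+ 2) ^+ j + (1 + u) ^+ j - 2 * (1 + u * r) ^+ j).

Lemma geo_diff2S (k : nat) (u r : R) : geo_diff2 k.+1 u r =
  \sum_(j < k) ((1 + u * r ^+ 2) ^+ j.+1 + (1 + u) ^+ j.+1 - 2 * (1 + u * r) ^+ j.+1).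
Proof.
by rewrite /geo_diff2 big_ord_recl !expr0 mulr1 [1 + 1 - 2]subrr add0r.
Qed.

Lemma geo_diff2_gt0 (n : nat) (u r : R) :
  0 < u -> 0 <= r -> r != 1 -> 0 < geo_diff2 n.+2 u r.
Proof.
move=> u_gt0 r_ge0 r_neq1; rewrite geo_diff2S big_ord_recl /= !expr1.
have gap_gt0 : 0 < u * (1 - r) ^+ 2.
  by rewrite mulr_gt0 // exprn_even_gt0 //= subr_eq0 eq_sym.
have rest_ge0 (j : nat) :
    0 <= (1 + u * r ^+ 2) ^+ j + (1 + u) ^+ j - 2 * (1 + u * r) ^+ j.
  rewrite subr_ge0; apply: AGM2_expr.
  - by rewrite addr_ge0 // mulr_ge0 ?exprn_ge0 // ltW.
  - lra.
  - by rewrite addr_ge0 // mulr_ge0 // ltW.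
  rewrite -subr_ge0 (_ : _ - _ = u * (1 - r) ^+ 2); first exact: ltW.
  ring.
have -> : 1 + u * r ^+ 2 + (1 + u) - 2 * (1 + u * r) = u * (1 - r) ^+ 2 by ring.
by rewrite ltr_pwDl // sumr_ge0.
Qed.

Lemma sum_ord_affine (n : nat) (u r : R) :
  \sum_(j < n) (u - 2 * j.+1%:R * u * r) = n%:R * u * (1 - n.+1%:R * r).
Proof.
elim: n => [|n IH]; first by rewrite big_ord0 mul0r mul0r.
by rewrite big_ord_recr /= IH -[n.+2]addn1 -[n.+1]addn1 !natrD; ring.
Qed.

Lemma geo_diff2_lt0 (n : nat) (u r : R) :
  -1 <= u < 0 -> 0 < r < 1 -> n.+2%:R * r <= 1 -> geo_diff2 n.+2 u r < 0.
Proof.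
move=> /andP[u_ge u_lt0] /andP[r_gt0 r_lt1] nr_le1.
have term_le (j : nat) : (1 + u * r ^+ 2) ^+ j.+1 + (1 + u) ^+ j.+1
    - 2 * (1 + u * r) ^+ j.+1 <= u - 2 * j.+1%:R * u * r.
  have t1 : (1 + u * r ^+ 2) ^+ j.+1 <= 1 by apply: exprn_ile1; nra.
  have t2 : (1 + u) ^+ j.+1 <= 1 + u.
    by rewrite exprS ler_piMr ?exprn_ile1; lra.
  have t3 : 1 + j.+1%:R * (u * r) <= (1 + u * r) ^+ j.+1 by apply: bernoulli_ineq; nra.
  rewrite (_ : 2 * j.+1%:R * u * r = 2 * (j.+1%:R * (u * r))); last by ring.
  move: t1 t2 t3; set A := _ ^+ j.+1; set B := _ ^+ j.+1; set C := _ ^+ j.+1.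
  lra.
have first_lt : (1 + u * r ^+ 2) ^+ 1 + (1 + u) ^+ 1 - 2 * (1 + u * r) ^+ 1 <
    u - 2 * 1%:R * u * r.
  have : 0 < r ^+ 2 by apply: exprn_gt0.
  rewrite !expr1 mulr1; nra.
rewrite geo_diff2S (lt_le_trans (y := \sum_(j < n.+1) (u - 2 * j.+1%:R * u * r))) //.
  rewrite big_ord_recl [X in _ < X]big_ord_recl /=.
  by apply: ltr_leD => //; apply: ler_sum => j _; apply: term_le.
rewrite sum_ord_affine -mulrA; apply: mulr_ge0_le0; first exact: ler0n.
by apply: mulr_le0_ge0; lra.
Qed.

Lemma geo_diff2_mul_gt0 (k : nat) (u r : R) :
  (2 <= k)%N -> 0 < r < 1 -> k%:R * r <= 1 -> -1 <= u <= 1 -> u != 0 ->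
  0 < u * geo_diff2 k u r.
Proof.
case: k => [|[|n]] // _ r01 kr /andP[u_ge u_le] u_neq0.
have [u_lt0|u_gt0|u_eq0] := ltgtP u 0; last by rewrite u_eq0 eqxx in u_neq0.
- by rewrite nmulr_rgt0 // geo_diff2_lt0 // u_lt0 u_ge.
- by rewrite pmulr_rgt0 // geo_diff2_gt0 // ?ltW ?lt_eqF //; case/andP: r01.
Qed.

Lemma geo_expr (k : nat) (s : R) : (1 + s) ^+ k = 1 + s * \sum_(j < k) (1 + s) ^+ j.
Proof. by rewrite -[LHS](subrK 1) subrX1 addrC [1 + s]addrC addrK. Qed.

Lemma geo_diff2_expr (k : nat) (C r u : R) : C ^+ k * r = 1 ->
  r ^+ 2 * ((C ^+ 2 * (1 + u * r ^+ 2)) ^+ k - 2 * (C * (1 + u * r)) ^+ k + (1 + u) ^+ k) =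
  (1 - r) ^+ 2 + u * r ^+ 2 * geo_diff2 k u r.
Proof.
move=> Ckr; have r_neq0 : r != 0.
  by apply: contra_eq_neq Ckr => ->; rewrite mulr0 eq_sym oner_neq0.
have Ck : C ^+ k = r^-1 by apply: (mulIf r_neq0); rewrite Ckr mulVf.
have -> : geo_diff2 k u r = \sum_(j < k) (1 + u * r ^+ 2) ^+ j
    + \sum_(j < k) (1 + u) ^+ j - 2 * \sum_(j < k) (1 + u * r) ^+ j.
  by rewrite mulr_sumr -big_split -sumrB.
by rewrite !exprMn Ck !(geo_expr k); field.
Qed.

End SecondDifference.

Section Overlap.
Variables (R : rcfType) (k : nat) (lam : R).

Definition phi2_ab (a b : R) : R :=
  (lam ^+ 2 * a + 2 * lam * b + a) ^+ k - 2 * (lam * b + a) ^+ k + a ^+ k.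

Lemma sum2_prod_rho (rho : {ffun bool * bool -> R}) (F G : 'I_k -> bool -> R) :
  \sum_(s : Sig k) \sum_(t : Sig k)
     (\prod_i F i (s i)) * (\prod_i G i (t i)) * \prod_i rho (s i, t i) =
  \prod_i \sum_x \sum_y F i x * G i y * rho (x, y).
Proof.
rewrite -sum_ffun2_prod; apply: eq_bigr => s _; apply: eq_bigr => t _.
by rewrite -!big_split.
Qed.

Variables (rho : {ffun bool * bool -> R}) (a b : R).
Hypothesis rho_ab : forall x y, rho (x, y) = if x == y then a else b.

Lemma sum2_psi_tau_rho (t0 : Sig k) :
  \sum_(s : Sig k) \sum_(t : Sig k)
     psi_tau lam t0 s * psi_tau lam t0 t * \prod_i rho (s i, t i) = phi2_ab a b.
Proof.
pose A i x := lam ^+ (x == t0 i); pose B i x := ((x == ~~ t0 i)%:R : R).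
pose S F G := \sum_(s : Sig k) \sum_(t : Sig k)
  (\prod_i F i (s i)) * (\prod_i G i (t i)) * \prod_i rho (s i, t i).
have S_const F G c : (forall i, \sum_x \sum_y F i x * G i y * rho (x, y) = c) ->
    S F G = c ^+ k.
  by move=> Fc; rewrite /S sum2_prod_rho (eq_bigr _ (fun i _ => Fc i)) prodr_const card_ord.
transitivity (S A A - S A B - S B A + S B B).
  rewrite /S -!sumrB -big_split; apply: eq_bigr => s _.
  rewrite -!sumrB -big_split; apply: eq_bigr => t _.
  by rewrite !psi_tauE /A /B /=; ring.
have coord i : [/\ \sum_x \sum_y A i x * A i y * rho (x, y) = lam ^+ 2 * a + 2 * lam * b + a,
    \sum_x \sum_y A i x * B i y * rho (x, y) = lam * b + a,
    \sum_x \sum_y B i x * A i y * rho (x, y) = lam * b + a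
  & \sum_x \sum_y B i x * B i y * rho (x, y) = a].
  by rewrite /A /B !big_bool !rho_ab; case: (t0 i) => /=; split; ring.
rewrite (S_const A A (lam ^+ 2 * a + 2 * lam * b + a)); last by move=> i; case: (coord i).
rewrite (S_const A B (lam * b + a)); last by move=> i; case: (coord i).
rewrite (S_const B A (lam * b + a)); last by move=> i; case: (coord i).
rewrite (S_const B B a); last by move=> i; case: (coord i).
by rewrite /phi2_ab; ring.
Qed.

Lemma phi2E : phi2 k lam rho = phi2_ab a b.
Proof.
rewrite /phi2 /Epsi.
under eq_bigr do under eq_bigr do rewrite -mulrA mulr_suml.
under eq_bigr do rewrite -mulr_sumr exchange_big /=.
rewrite -mulr_sumr exchange_big /=.
under eq_bigr do rewrite sum2_psi_tau_rho.
exact: mean_Sig_const.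
Qed.

End Overlap.

Section OverlapMinimum.
Variables (R : rcfType) (k : nat) (lam : R).
Hypotheses (k_ge3 : (3 <= k)%N) (lam_range : 0 < lam < 1).
Hypothesis lam_root : (1 - lam) * (1 + lam) ^+ k.-1 - 1 = 0.

Local Notation r := ((1 - lam) / (1 + lam)).

Lemma ratio_bounds : 0 < r < 1.
Proof.
have /andP[lam_gt0 lam_lt1] := lam_range.
have C_gt0 : 0 < 1 + lam by lra.
by rewrite divr_gt0 ?subr_gt0 //= ltr_pdivrMr // mul1r; lra.
Qed.

Lemma expr_ratio : (1 + lam) ^+ k * r = 1.
Proof.
have /andP[lam_gt0 _] := lam_range.
have k_gt0 : (0 < k)%N by apply: leq_trans k_ge3.
have := lam_root; rewrite -(prednK k_gt0) exprS /=; set X := (1 + lam) ^+ k.-1 => root.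
rewrite (_ : _ * X * _ = (1 - lam) * X); first lra.
by field; apply: lt0r_neq0; lra.
Qed.

(* Bernoulli turns the root equation into [lam >= (k-2)/(k-1)], and
   [(k-2)/(k-1) >= (k-1)/(k+1)] exactly when [k >= 3]. *)
Lemma ratio_le_inv_k : k%:R * r <= 1.
Proof.
have /andP[lam_gt0 lam_lt1] := lam_range.
have k_gt0 : (0 < k)%N by apply: leq_trans k_ge3.
have K2 : 2 <= k.-1%:R :> R by rewrite (ler_nat R 2) -ltnS prednK.
have bern := bernoulli_ineq k.-1 (ltW (lt_trans (ltrN10 R) lam_gt0)).
have root := lam_root.
rewrite -(prednK k_gt0) -natr1 mulrA ler_pdivrMr ?mul1r; last lra.
set P := (1 + lam) ^+ k.-1 in bern root; set K := k.-1%:R in K2 bern *.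
have root_ge : (1 - lam) * (1 + K * lam) <= 1.
  have : (1 - lam) * (1 + K * lam) <= (1 - lam) * P by rewrite ler_wpM2l // subr_ge0 ltW.
  lra.
have lam_ge : K - K * lam <= 1.
  have : lam * (K - K * lam - 1) <= 0 by nra.
  by rewrite pmulr_rle0 // subr_le0.
have : 1 <= 2 * lam by nra.
lra.
Qed.

Lemma phi2_ab_expand (a b : R) : a + b = 2^-1 ->
  r ^+ 2 * (4 ^+ k * phi2_ab k lam a b) =
  (1 - r) ^+ 2 + (4 * a - 1) * r ^+ 2 * geo_diff2 k (4 * a - 1) r.
Proof.
have /andP[lam_gt0 lam_lt1] := lam_range.
have C_neq0 : 1 + lam != 0 by apply: lt0r_neq0; lra.
move=> ab; rewrite -(geo_diff2_expr _ expr_ratio) (_ : b = 2^-1 - a); last lra.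
have e1 : (1 + lam) ^+ 2 * (1 + (4 * a - 1) * r ^+ 2) =
    4 * (lam ^+ 2 * a + 2 * lam * (2^-1 - a) + a) by field.
have e2 : (1 + lam) * (1 + (4 * a - 1) * r) = 4 * (lam * (2^-1 - a) + a) by field.
by rewrite e1 e2 (_ : 1 + (4 * a - 1) = 4 * a) /phi2_ab ?exprMn; ring.
Qed.

Lemma phi2_ab_gt_unif (a : R) : 0 <= a <= 2^-1 -> a != 4^-1 ->
  phi2_ab k lam 4^-1 4^-1 < phi2_ab k lam a (2^-1 - a).
Proof.
move=> a_range a_neq.
have /andP[r_gt0 _] := ratio_bounds.
have four_gt0 : 0 < 4 ^+ k :> R by rewrite exprn_gt0.
rewrite -(ltr_pM2l four_gt0) -(ltr_pM2l (exprn_gt0 2 r_gt0)).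
rewrite !phi2_ab_expand; [|lra|lra].
rewrite (_ : 4 * 4^-1 - 1 = 0 :> R) ?mul0r ?addr0; last by field.
rewrite ltrDl mulrAC mulr_gt0 ?exprn_gt0 //.
apply: geo_diff2_mul_gt0 (ltnW k_ge3) ratio_bounds ratio_le_inv_k _ _.
  by apply/andP; split; lra.
by rewrite subr_eq0; apply: contra a_neq => /eqP a4; apply/eqP; lra.
Qed.

End OverlapMinimum.

Lemma unif2_dist (R : rcfType) : is_dist2_unif_marg (unif2 R).
Proof.
split; first by move=> w; rewrite ffunE invr_ge0 ler0n.
split.
  by under eq_bigr do rewrite ffunE; rewrite sumr_const card_prod card_bool -mulr_natr; field.
by split=> w; rewrite big_bool /= !ffunE; field.
Qed.

Lemma dist2_unif_margP (R : rcfType) (rho : {ffun bool * bool -> R}) :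
  is_dist2_unif_marg rho ->
  [/\ forall x y, rho (x, y) = if x == y then rho (true, true) else rho (true, false),
      0 <= rho (true, true), 0 <= rho (true, false)
    & rho (true, true) + rho (true, false) = 2^-1].
Proof.
move=> [rho_ge0 [_ [row col]]].
have := row true; have := row false; have := col true; have := col false.
rewrite !big_bool /= => c0 c1 r0 r1.
by split; [case; case => /=; lra | apply: rho_ge0 | apply: rho_ge0 | lra].
Qed.

Lemma min_holds (R : rcfType) (k : nat) (lam : R) :
  (3 <= k)%N -> 0 < lam < 1 -> (1 - lam) * (1 + lam) ^+ k.-1 - 1 = 0 ->
  MIN k lam.
Proof.
move=> k_ge3 lam_range lam_root; split=> [|rho rho_dist rho_neq]; first exact: unif2_dist.
have [rho_ab a_ge0 b_ge0 ab] := dist2_unif_margP rho_dist.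
rewrite (phi2E k lam rho_ab) (_ : rho (true, false) = 2^-1 - rho (true, true)); last lra.
rewrite (@phi2E _ k lam _ 4^-1 4^-1) => [|x y]; last by rewrite ffunE; case: eqP.
apply: phi2_ab_gt_unif => //; first by apply/andP; split; lra.
apply: contra_not_neq rho_neq => a4; apply/ffunP => -[x y].
by rewrite rho_ab !ffunE; case: eqP; lra.
Qed.

(** * Satisfiability of unicyclic instances *)

Section MinDegreeCycle.
Variables (V : finType) (e : rel V) (A : pred V).
Hypotheses (e_sym : symmetric e) (e_irr : irreflexive e).
Hypothesis two_nbrs :
  forall v, A v -> exists u w, [/\ u != w, A u, A w, e v u & e v w].

Definition simple_pathA (s : seq V) := [&& uniq s, all A s & sorted e s].

Lemma chord_cycle (x y : V) (q : seq V) : uniq (x :: q) -> path e x q -> e x y ->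
  y \in q -> y != head x q -> exists c, is_graph_cycle e c.
Proof.
move=> xq_uniq xq_path exy yq y_head; set j := index y q.
have j_lt : (j < size q)%N by rewrite index_mem.
have j_gt0 : (0 < j)%N.
  by move: yq y_head; rewrite /j; case: (q) => //= z q' _ yz; rewrite eq_sym (negbTE yz).
have take_j1 : take j.+1 q = rcons (take j q) y by rewrite (take_nth y j_lt) nth_index.
exists (x :: rcons (take j q) y); split.
- by rewrite -take_j1 -[x :: _]/(take j.+2 (x :: q)) take_uniq.
- by rewrite /= size_rcons size_takel ?(ltnW j_lt).
- by rewrite /cycle /= rcons_path last_rcons e_sym exy andbT -take_j1 take_path.
Qed.

Lemma simple_pathA_extend (s : seq V) : simple_pathA s -> s != [::] ->
  (exists c, is_graph_cycle e c) \/
  (exists s', simple_pathA s' /\ size s' = (size s).+1).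
Proof.
case: s => [//|x q] /and3P[xq_uniq /= /andP[Ax Aq] xq_path] _.
have [u [w [uw Au Aw exu exw]]] := two_nbrs Ax.
have [y [Ay exy y_head]] : exists y, [/\ A y, e x y & y != head x q].
  by case: (eqVneq u (head x q)) => [uh|]; [exists w; rewrite -uh eq_sym | exists u].
case yxq: (y \in x :: q); last first.
  right; exists (y :: x :: q); split=> //.
  by rewrite /simple_pathA cons_uniq yxq xq_uniq /= Ay Ax Aq e_sym exy xq_path.
left; apply: (chord_cycle xq_uniq xq_path exy _ y_head).
by move: yxq; rewrite inE; case: eqP => // yx; move: exy; rewrite yx e_irr.
Qed.

Lemma min_degree2_cycle (x0 : V) : A x0 -> exists c, is_graph_cycle e c.
Proof.
move=> Ax0.
suff [//|[s [/and3P[us _ _] sz]]] : (exists c, is_graph_cycle e c) \/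
    (exists s, simple_pathA s /\ size s = #|V|.+1).
  by have := max_card (mem s); rewrite (card_uniqP us) sz ltnn.
elim: #|V| => [|n [hc|[s [sp sz]]]].
- by right; exists [:: x0]; rewrite /simple_pathA /= Ax0.
- by left.
have s_neq_nil : s != [::] by rewrite -size_eq0 sz.
case: (simple_pathA_extend sp s_neq_nil) => [|[s' [sp' sz']]]; first by left.
by right; exists s'; rewrite sz' sz.
Qed.

End MinDegreeCycle.

Section DistinctRepresentatives.
Variables (X C : finType) (N : C -> {set X}).

Definition bip_adj : rel (X + C) := fun u v =>
  match u, v with
  | inl x, inr a | inr a, inl x => x \in N a
  | _, _ => false
  end.

Lemma bip_adj_sym : symmetric bip_adj. Proof. by case=> [x|a] [y|b]. Qed.

Lemma bip_adj_irr : irreflexive bip_adj. Proof. by case. Qed.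

Hypothesis N_two : forall a, (1 < #|N a|)%N.
Hypothesis acyclic : forall c, ~ is_graph_cycle bip_adj c.

(* Otherwise the constraints of [S] and the variables they share all have
   two distinct neighbours among them, which forces a cycle. *)
Lemma private_neighbour (S : {set C}) : S != set0 ->
  exists a x, [/\ a \in S, x \in N a & forall b, b \in S -> b != a -> x \notin N b].
Proof.
move=> S_neq0.
have [/exists_inP [a aS /exists_inP [x xNa /forall_inP priv]]|no_priv] :=
  boolP [exists a in S, exists x in N a, [forall b in S, (b != a) ==> (x \notin N b)]].
  by exists a, x; split=> // b bS ba; have := priv b bS; rewrite ba.
have shared a x : a \in S -> x \in N a -> exists b, [/\ b \in S, b != a & x \in N b].
  move=> aS xNa; move/exists_inPn/(_ a aS)/exists_inPn/(_ x xNa): no_priv.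
  by case/forall_inPn => b bS; rewrite negb_imply negbK => /andP[ba xb]; exists b.
pose A (v : X + C) := if v is inl x then [exists b in S, x \in N b] else
  if v is inr a then a \in S else false.
have [a1 a1S] := set0Pn _ S_neq0.
have [|c] := @min_degree2_cycle _ _ A bip_adj_sym bip_adj_irr _ (inr a1) a1S; last first.
  by move/acyclic.
case=> [x /exists_inP [b bS xNb]|a aS] /=.
  have [b' [b'S b'b xNb']] := shared b x bS xNb.
  by exists (inr b), (inr b'); split => //; apply: contra b'b => /eqP [->].
have [x1 [x2 [x1N x2N x12]]] := card_gt1P (N_two a).
by exists (inl x1), (inl x2); split=> //=; apply/exists_inP; exists a.
Qed.

Lemma distinct_representatives_in (S : {set C}) :
  exists f : C -> X, {in S, forall a, f a \in N a} /\ {in S &, injective f}.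
Proof.
elim: {S}_.+1 {-2}S (ltnSn #|S|) => // n IH S S_lt.
have [->|S_neq0] := eqVneq S set0.
  by exists (fun a => xchoose (card_gt0P (ltnW (N_two a)))); split=> [a|a b]; rewrite inE.
have [a [x [aS xNa x_priv]]] := private_neighbour S_neq0.
have [|f [fN f_inj]] := IH (S :\ a).
  by rewrite -ltnS (leq_trans _ S_lt) // (cardsD1 a S) aS.
have fN' b : b \in S -> b != a -> f b \in N b by move=> bS ba; apply: fN; rewrite !inE ba.
exists (fun b => if b == a then x else f b); split=> [b bS|b c bS cS] /=.
  by case: eqVneq => [->|ba] //; apply: fN'.
case: eqVneq => [->|ba]; case: eqVneq => [->|ca] //.
- by move=> xf; have := fN' c cS ca; rewrite -xf (negbTE (x_priv c cS ca)).
- by move=> fx; have := fN' b bS ba; rewrite fx (negbTE (x_priv b bS ba)).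
- by apply: f_inj; rewrite !inE ?ba ?ca.
Qed.

Lemma distinct_representatives : exists f : C -> X, (forall a, f a \in N a) /\ injective f.
Proof.
have [f [fN f_inj]] := distinct_representatives_in setT.
by exists f; split=> [a|a b]; [apply: fN | apply: f_inj]; rewrite inE.
Qed.

End DistinctRepresentatives.

Lemma psi_tau_gt0 (R : rcfType) (k : nat) (lam : R) (tau sigma : Sig k) (i : 'I_k) :
  0 < lam -> sigma i = tau i -> 0 < psi_tau lam tau sigma.
Proof.
move=> lam_gt0 st; rewrite ffunE [\prod_(_ < _) _](bigD1 i) //= st.
by rewrite (_ : (tau i == ~~ tau i) = false) ?mul0r ?subr0 ?mulr1 ?exprn_gt0 //; case: (tau i).
Qed.

Section UnicyclicFactorGraph.
Variables (k n m : nat) (dd : 'I_m -> 'I_k -> 'I_n).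

Lemma cycle_has_edge (c : seq ('I_n + 'I_m)) : is_graph_cycle (fg_adj dd) c ->
  exists x0 a0, [set inl x0; inr a0] \in cycle_edges c.
Proof.
have edge u w : fg_adj dd u w -> exists x a, [set u; w] = [set inl x; inr a].
  by case: u w => [x|a] [y|b] //= _; [exists x, b | exists y, a; rewrite setUC].
case: c => [|v c] [_ _ c_cyc] //.
have [x [a E]] := edge _ _ (next_cycle c_cyc (mem_head v c)).
by exists x, a; apply/imsetP; exists v; rewrite ?mem_head.
Qed.

Variables (x0 : 'I_n) (a0 : 'I_m).

Definition cut_nbhd (a : 'I_m) : {set 'I_n} :=
  [set x in codom (dd a) | (a != a0) || (x != x0)].

Lemma cut_adj_sub : subrel (bip_adj cut_nbhd) (fg_adj dd).
Proof. by case=> [x|a] [y|b] //=; rewrite inE => /andP[]. Qed.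

Lemma cut_edge_notin_cycle (c : seq ('I_n + 'I_m)) :
  cycle (bip_adj cut_nbhd) c -> [set inl x0; inr a0] \notin cycle_edges c.
Proof.
move=> c_cyc; apply/imsetP => -[u uc E].
have u_edge : u \in [set inl x0; inr a0] by rewrite E !inE eqxx.
have nu_edge : next c u \in [set inl x0; inr a0] by rewrite E !inE eqxx orbT.
move: nu_edge (next_cycle c_cyc uc).
by case/set2P: u_edge => ->; case/set2P => -> //=; rewrite inE !eqxx andbF.
Qed.

Lemma cut_nbhd_two (a : 'I_m) : (3 <= k)%N -> injective (dd a) -> (1 < #|cut_nbhd a|)%N.
Proof.
move=> k_ge3 dd_inj.
have sub : [set x in codom (dd a)] :\ x0 \subset cut_nbhd a.
  by apply/subsetP => x; rewrite !inE => /andP[-> ->]; rewrite orbT.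
apply: leq_trans (subset_leq_card sub).
have := cardsD1 x0 [set x in codom (dd a)].
rewrite cardsE card_codom // card_ord => k_eq.
by move: k_ge3; rewrite [X in (_ < X)%N -> _]k_eq; case: (_ \in _) => // /ltnW.
Qed.

Lemma cut_acyclic (c0 : seq ('I_n + 'I_m)) :
  (forall c c', is_graph_cycle (fg_adj dd) c -> is_graph_cycle (fg_adj dd) c' ->
     cycle_edges c = cycle_edges c') ->
  is_graph_cycle (fg_adj dd) c0 -> [set inl x0; inr a0] \in cycle_edges c0 ->
  forall c, ~ is_graph_cycle (bip_adj cut_nbhd) c.
Proof.
move=> edges_uniq c0_cyc e0 c [c_uniq c_size c_cyc].
have : is_graph_cycle (fg_adj dd) c by split=> //; apply: sub_cycle c_cyc; apply: cut_adj_sub.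
move/(edges_uniq _ _ c0_cyc) => E.
by move: e0; rewrite E (negbTE (cut_edge_notin_cycle c_cyc)).
Qed.

End UnicyclicFactorGraph.

Lemma uni_holds (R : rcfType) (k : nat) (lam : R) :
  (3 <= k)%N -> 0 < lam -> UNI k lam.
Proof.
move=> k_ge3 lam_gt0 n m psi dd psi_supp dd_inj [_ [[c0 c0_cyc] edges_uniq]].
have tau_ex a : exists tau, psi_tau lam tau == psi a.
  by have [tau <-] := Pk_gt0 (psi_supp a); exists tau.
pose tau a := xchoose (tau_ex a).
have [x0 [a0 e0]] := cycle_has_edge c0_cyc.
have [f [fN f_inj]] := distinct_representatives
  (fun a => cut_nbhd_two x0 a0 k_ge3 (dd_inj a)) (cut_acyclic edges_uniq c0_cyc e0).
have idx_ex a : exists i, f a == dd a i.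
  by have := fN a; rewrite inE => /andP[/codomP [i ->] _]; exists i.
pose idx a := xchoose (idx_ex a).
exists (fun x => if [pick a | f a == x] is Some a then tau a (idx a) else true).
apply: prodr_gt0 => a _; rewrite -(eqP (xchooseP (tau_ex a))).
apply: (psi_tau_gt0 (i := idx a)) => //; rewrite ffunE -(eqP (xchooseP (idx_ex a))).
by case: pickP => [b /eqP/f_inj -> //|/(_ a)]; rewrite eqxx.
Qed.

Theorem mainTheorem15 (k : nat) (R : rcfType) (lam : R) :
  (3 <= k)%N -> 0 < lam < 1 ->
  (1 - lam) * (1 + lam) ^+ k.-1 - 1 = 0 ->
  SYM k lam /\ BAL k lam /\ MIN k lam /\ UNI k lam.
Proof.
move=> k_ge3 lam_range lam_root.
have k_gt0 : (0 < k)%N by apply: leq_trans k_ge3.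
have /andP[lam_gt0 _] := lam_range.
split; first exact: sym_holds.
split; first exact: bal_holds.
split; first exact: min_holds.
exact: uni_holds.
Qed.
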